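(* Let $e_1,e_2$ be two edges of $F_4$ with no common end-vertex. Let $H$ be obtained from $F_4$ by subdividing each of $e_1$ and $e_2$ with one new vertex and then adding an edge between these two new vertices. Then $H$ contains $K_{3,4}$ as a minor.
   Context: $F_4$ is the graph with vertex set $\{f^1,f^2\}\cup\{f^i_j: i\in\{1,2\}, j\in\{1,2,3,4\}\}$ and the 16 edges: for each $i\in\{1,2\}$, $f^if^i_1$, $f^if^i_2$, $f^if^i_4$, $f^i_3f^i_1$, $f^i_3f^i_2$, $f^i_3f^i_4$; and $f^1_jf^2_{5-j}$ for $j=1,2,3,4$. *)

From mathcomp Require Import all_boot.
Set Implicit Arguments. Unset Strict Implicit. Unset Printing Implicit Defensive.

(* Simple graphs are given by a symmetric irreflexive relation on a finType. *)

Definition connected_in (T : finType) (e : rel T) (S : {set T}) : Prop :=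
  forall x y, x \in S -> y \in S ->
    connect [rel a b | e a b && (a \in S) && (b \in S)] x y.

Definition has_minor (T K : finType) (e : rel T) (eK : rel K) : Prop :=
  exists phi : K -> {set T},
    [/\ forall k, phi k != set0,
        forall k, connected_in e (phi k),
        forall k k', k != k' -> [disjoint phi k & phi k'] &
        forall k k', eK k k' ->
          exists x y, [/\ x \in phi k, y \in phi k' & e x y]].

Definition K34_rel : rel ('I_3 + 'I_4)%type :=
  fun a b => match a, b with
             | inl _, inr _ | inr _, inl _ => true
             | _, _ => false
             end.

(* F_4 on vertex set 'I_10 with labelling
   f^1 = 0, f^2 = 1, f^1_j = 1 + j, f^2_j = 5 + j  (j = 1..4). *)
Definition F4_edges : seq (nat * nat) :=
  [:: (0,2); (0,3); (0,5); (4,2); (4,3); (4,5);     (* i = 1 *)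
      (1,6); (1,7); (1,9); (8,6); (8,7); (8,9);     (* i = 2 *)
      (2,9); (3,8); (4,7); (5,6)].                  (* f^1_j f^2_{5-j} *)

Definition F4_adj : rel 'I_10 :=
  fun a b => ((nat_of_ord a, nat_of_ord b) \in F4_edges)
          || ((nat_of_ord b, nat_of_ord a) \in F4_edges).

Definition same_edge (a b u v : 'I_10) : bool :=
  ((a == u) && (b == v)) || ((a == v) && (b == u)).

Definition H_rel (u v x y : 'I_10) : rel ('I_10 + bool)%type :=
  fun p q => match p, q with
    | inl a, inl b => F4_adj a b && ~~ same_edge a b u v && ~~ same_edge a b x y
    | inl a, inr false | inr false, inl a => (a == u) || (a == v)
    | inl a, inr true  | inr true,  inl a => (a == x) || (a == y)
    | inr s, inr t => s != t
    end.

From mathcomp Require Import all_boot.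
Set Implicit Arguments. Unset Strict Implicit. Unset Printing Implicit Defensive.

(* There are 84 unordered pairs of disjoint edges in F_4, so the theorem is a finite
   check: for each pair we list seven branch sets of a K_{3,4} model in H and let the
   kernel verify them by computation.  A branch set is listed so that each vertex is
   adjacent to an earlier one, which certifies that it induces a connected subgraph.
   The order of the two edges does not matter: exchanging e_1 and e_2 only exchanges
   the two subdivision vertices. *)

Section ConnectedIn.
Variables (T : finType) (e : rel T).

Lemma connected_in_set1 z : connected_in e [set z].
Proof. by move=> a b; rewrite !inE => /eqP-> /eqP->; apply: connect0. Qed.

Lemma connected_in_setU1 (S : {set T}) z w :
  connected_in e S -> w \in S -> e w z -> e z w -> connected_in e (z |: S).
Proof.
move=> connS wS ewz ezw.
set induced := [rel a b | e a b && (a \in z |: S) && (b \in z |: S)].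
have zSz : z \in z |: S by rewrite setU11.
have wSz : w \in z |: S by rewrite setU1r.
have connSz a b : a \in S -> b \in S -> connect induced a b.
  move=> aS bS; apply: connect_sub (connS a b aS bS) => c d /andP[/andP[ecd cS] dS].
  by apply: connect1; rewrite /= ecd !setU1r.
have zw : connect induced z w by apply: connect1; rewrite /= ezw zSz wSz.
have wz : connect induced w z by apply: connect1; rewrite /= ewz zSz wSz.
move=> a b /setU1P[->|aS] /setU1P[->|bS].
- exact: connect0.
- exact: connect_trans zw (connSz w b wS bS).
- exact: connect_trans (connSz a w aS wS) wz.
- exact: connSz.
Qed.

Fixpoint attached (p r : seq T) : bool :=
  if r is z :: r' then has (fun w => e w z && e z w) p && attached (rcons p z) r'
  else true.

Lemma connected_in_attached p r :
  connected_in e [set z in p] -> attached p r -> connected_in e [set z in p ++ r].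
Proof.
elim: r p => [|z r IHr] p connp /=; first by rewrite cats0.
case/andP=> /hasP[w wp /andP[ewz ezw]]; rewrite -cat_rcons; apply: IHr.
have -> : [set a in rcons p z] = z |: [set a in p].
  by apply/setP=> a; rewrite !inE mem_rcons inE.
by apply: connected_in_setU1 connp _ ewz ezw; rewrite inE.
Qed.

Definition connected_seq (s : seq T) : bool :=
  if s is z :: r then attached [:: z] r else false.

Lemma connected_in_seq s : connected_seq s -> connected_in e [set z in s].
Proof.
case: s => [|z r] //= att; apply: (connected_in_attached (p := [:: z])) att.
have -> : [set a in [:: z]] = [set z] by apply/setP=> a; rewrite !inE.
exact: connected_in_set1.
Qed.

End ConnectedIn.

Section SeqMinorModel.
Variables (T K : finType) (e : rel T) (eK : rel K) (ks : seq K).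
Hypothesis ksT : forall k, k \in ks.

Definition seq_minor_model (phi : K -> seq T) : bool :=
  [&& all (fun k => connected_seq e (phi k)) ks,
      all (fun k => all (fun k' => (k != k') ==> ~~ has (mem (phi k')) (phi k)) ks) ks &
      all (fun k => all (fun k' =>
        eK k k' ==> has (fun a => has (e a) (phi k')) (phi k)) ks) ks].

Lemma seq_minor_modelP phi : seq_minor_model phi -> has_minor e eK.
Proof.
case/and3P=> /allP conn /allP disj /allP adj.
exists (fun k => [set z in phi k]); split.
- move=> k; move: (conn k (ksT k)); case: (phi k) => [|z r] //= _.
  by apply/set0Pn; exists z; rewrite !inE eqxx.
- by move=> k; apply: connected_in_seq; apply: conn.
- move=> k k' kk'; move/allP: (disj k (ksT k)) => /(_ k' (ksT k')).
  rewrite kk' /= => /hasPn disj_kk'.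
  by rewrite disjoint_subset; apply/subsetP=> z; rewrite !inE; apply: disj_kk'.
- move=> k k' ekk'; move/allP: (adj k (ksT k)) => /(_ k' (ksT k')); rewrite ekk' /=.
  by case/hasP=> a ak /hasP[b bk' eab]; exists a, b; rewrite !inE.
Qed.

End SeqMinorModel.

(* [enum 'I_n] is stuck under [vm_compute], since [insub] matches on an opaque proof. *)
Fixpoint ord_seq n : seq 'I_n :=
  match n return seq 'I_n with
  | 0 => [::]
  | n'.+1 => ord0 :: map (lift ord0) (ord_seq n')
  end.

Lemma ord_seqE n : ord_seq n = enum 'I_n.
Proof. by elim: n => [|n IHn] /=; rewrite ?enum_ord0 // IHn enum_ordSl. Qed.

Lemma mem_ord_seq n (i : 'I_n) : i \in ord_seq n.
Proof. by rewrite ord_seqE mem_enum. Qed.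

Definition K34_vertices : seq ('I_3 + 'I_4) :=
  map inl (ord_seq 3) ++ map inr (ord_seq 4).

Lemma mem_K34_vertices k : k \in K34_vertices.
Proof.
rewrite mem_cat; case: k => i.
- by rewrite (mem_map inl_inj) mem_ord_seq.
- by rewrite (mem_map inr_inj) mem_ord_seq orbT.
Qed.

Definition K34_branch (T : Type) (ss : seq (seq T)) (k : 'I_3 + 'I_4) : seq T :=
  nth [::] ss (match k with inl i => val i | inr j => 3 + val j end).

(* Vertices of H in the models below: [0..9] are those of F_4 as numbered in [F4_edges],
   [10] and [11] subdivide the first and second edge of the key, which is [e_1, e_2]
   when [swap] is false and [e_2, e_1] otherwise. *)
Definition H_vertex (swap : bool) (n : nat) : 'I_10 + bool :=
  if n < 10 then inl (nth ord0 (ord_seq 10) n) else inr (swap (+) (n == 11)).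

Definition same_pair (a b c d : nat) : bool :=
  ((a == c) && (b == d)) || ((a == d) && (b == c)).

Definition K34_models : seq (nat * nat * nat * nat * seq (seq nat)) := [::
  (0, 2, 4, 3, [:: [:: 4; 5]; [:: 3; 8]; [:: 1; 9; 2; 10]; [:: 0]; [:: 6]; [:: 7]; [:: 11]]);
  (0, 2, 4, 5, [:: [:: 3; 4]; [:: 5; 6]; [:: 2; 9; 10]; [:: 0]; [:: 8]; [:: 11]; [:: 1; 7]]);
  (0, 2, 1, 6, [:: [:: 4]; [:: 8]; [:: 0; 10]; [:: 3]; [:: 5; 6]; [:: 2; 9]; [:: 1; 7; 11]]);
  (0, 2, 1, 7, [:: [:: 4]; [:: 8]; [:: 0; 10]; [:: 3]; [:: 5; 6]; [:: 2; 9]; [:: 7; 11]]);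
  (0, 2, 1, 9, [:: [:: 4]; [:: 8]; [:: 0; 10]; [:: 3]; [:: 5; 6]; [:: 2; 9]; [:: 1; 7; 11]]);
  (0, 2, 8, 6, [:: [:: 8]; [:: 2; 4]; [:: 1; 6]; [:: 7]; [:: 9]; [:: 10; 11]; [:: 0; 3; 5]]);
  (0, 2, 8, 7, [:: [:: 4]; [:: 8]; [:: 0; 10]; [:: 3]; [:: 5; 6]; [:: 2; 9]; [:: 7; 11]]);
  (0, 2, 8, 9, [:: [:: 2; 4]; [:: 8; 11]; [:: 0; 5; 6; 1]; [:: 3]; [:: 7]; [:: 9]; [:: 10]]);
  (0, 2, 3, 8, [:: [:: 2; 4]; [:: 8; 11]; [:: 0; 5; 6; 1]; [:: 3]; [:: 7]; [:: 9]; [:: 10]]);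
  (0, 2, 4, 7, [:: [:: 4]; [:: 8]; [:: 0; 10]; [:: 3]; [:: 5; 6]; [:: 2; 9]; [:: 7; 11]]);
  (0, 2, 5, 6, [:: [:: 2; 4]; [:: 0; 3; 8]; [:: 1; 6; 11]; [:: 5]; [:: 7]; [:: 9]; [:: 10]]);
  (0, 3, 4, 2, [:: [:: 4; 5]; [:: 1; 9; 2]; [:: 3; 8; 10]; [:: 0]; [:: 6]; [:: 7]; [:: 11]]);
  (0, 3, 4, 5, [:: [:: 2; 4]; [:: 1; 6; 5]; [:: 3; 8; 10]; [:: 0]; [:: 7]; [:: 9]; [:: 11]]);
  (0, 3, 1, 6, [:: [:: 4]; [:: 8]; [:: 0; 10]; [:: 3]; [:: 5; 6]; [:: 2; 9]; [:: 1; 7; 11]]);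
  (0, 3, 1, 7, [:: [:: 4]; [:: 8]; [:: 0; 10]; [:: 3]; [:: 5; 6]; [:: 2; 9]; [:: 7; 11]]);
  (0, 3, 1, 9, [:: [:: 4]; [:: 8]; [:: 0; 10]; [:: 3]; [:: 5; 6]; [:: 2; 9]; [:: 1; 7; 11]]);
  (0, 3, 8, 6, [:: [:: 3; 4]; [:: 6; 11]; [:: 0; 2; 9]; [:: 5]; [:: 8]; [:: 10]; [:: 1; 7]]);
  (0, 3, 8, 7, [:: [:: 4]; [:: 8]; [:: 0; 10]; [:: 3]; [:: 5; 6]; [:: 2; 9]; [:: 7; 11]]);
  (0, 3, 8, 9, [:: [:: 3; 4]; [:: 9; 11]; [:: 0; 5; 6]; [:: 2]; [:: 8]; [:: 10]; [:: 1; 7]]);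
  (0, 3, 2, 9, [:: [:: 3; 4]; [:: 9; 11]; [:: 0; 5; 6]; [:: 2]; [:: 8]; [:: 10]; [:: 1; 7]]);
  (0, 3, 4, 7, [:: [:: 4]; [:: 8]; [:: 0; 10]; [:: 3]; [:: 5; 6]; [:: 2; 9]; [:: 7; 11]]);
  (0, 3, 5, 6, [:: [:: 3; 4]; [:: 6; 11]; [:: 0; 2; 9]; [:: 5]; [:: 8]; [:: 10]; [:: 1; 7]]);
  (0, 5, 4, 2, [:: [:: 3; 4]; [:: 2; 9]; [:: 5; 6; 10]; [:: 0]; [:: 8]; [:: 11]; [:: 1; 7]]);
  (0, 5, 4, 3, [:: [:: 2; 4]; [:: 3; 8]; [:: 1; 6; 5; 10]; [:: 0]; [:: 7]; [:: 9]; [:: 11]]);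
  (0, 5, 1, 6, [:: [:: 4]; [:: 8]; [:: 0; 10]; [:: 3]; [:: 5; 6]; [:: 2; 9]; [:: 1; 7; 11]]);
  (0, 5, 1, 7, [:: [:: 4]; [:: 8]; [:: 0; 10]; [:: 3]; [:: 5; 6]; [:: 2; 9]; [:: 7; 11]]);
  (0, 5, 1, 9, [:: [:: 4]; [:: 8]; [:: 0; 10]; [:: 3]; [:: 5; 6]; [:: 2; 9]; [:: 1; 7; 11]]);
  (0, 5, 8, 6, [:: [:: 4; 5]; [:: 8; 11]; [:: 0; 2; 9; 1]; [:: 3]; [:: 6]; [:: 7]; [:: 10]]);
  (0, 5, 8, 7, [:: [:: 4]; [:: 8]; [:: 0; 10]; [:: 3]; [:: 5; 6]; [:: 2; 9]; [:: 7; 11]]);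
  (0, 5, 8, 9, [:: [:: 8]; [:: 4; 5]; [:: 1; 9]; [:: 6]; [:: 7]; [:: 10; 11]; [:: 0; 2; 3]]);
  (0, 5, 2, 9, [:: [:: 4; 5]; [:: 0; 3; 8]; [:: 1; 9; 11]; [:: 2]; [:: 6]; [:: 7]; [:: 10]]);
  (0, 5, 3, 8, [:: [:: 4; 5]; [:: 8; 11]; [:: 0; 2; 9; 1]; [:: 3]; [:: 6]; [:: 7]; [:: 10]]);
  (0, 5, 4, 7, [:: [:: 4]; [:: 8]; [:: 0; 10]; [:: 3]; [:: 5; 6]; [:: 2; 9]; [:: 7; 11]]);
  (4, 2, 1, 6, [:: [:: 4]; [:: 0; 2]; [:: 6; 8]; [:: 3]; [:: 5]; [:: 10; 11]; [:: 1; 7; 9]]);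
  (4, 2, 1, 7, [:: [:: 3; 8]; [:: 2; 10]; [:: 1; 6; 5]; [:: 0]; [:: 4]; [:: 9]; [:: 7; 11]]);
  (4, 2, 1, 9, [:: [:: 8; 9]; [:: 4; 10]; [:: 0; 5; 6; 1]; [:: 2]; [:: 3]; [:: 7]; [:: 11]]);
  (4, 2, 8, 6, [:: [:: 4]; [:: 0; 2]; [:: 6; 11]; [:: 5]; [:: 10]; [:: 3; 8]; [:: 1; 7; 9]]);
  (4, 2, 8, 7, [:: [:: 4]; [:: 8]; [:: 0; 2]; [:: 3]; [:: 5; 6]; [:: 10; 11]; [:: 1; 7; 9]]);
  (4, 2, 8, 9, [:: [:: 4]; [:: 8]; [:: 0; 2]; [:: 3]; [:: 5; 6]; [:: 10; 11]; [:: 1; 7; 9]]);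
  (4, 2, 3, 8, [:: [:: 4]; [:: 0; 2]; [:: 8; 11]; [:: 3]; [:: 10]; [:: 5; 6]; [:: 1; 7; 9]]);
  (4, 2, 5, 6, [:: [:: 4]; [:: 0; 2]; [:: 6; 11]; [:: 5]; [:: 10]; [:: 3; 8]; [:: 1; 7; 9]]);
  (4, 3, 1, 6, [:: [:: 4]; [:: 8]; [:: 1; 11]; [:: 7]; [:: 5; 6]; [:: 2; 9]; [:: 3; 10]]);
  (4, 3, 1, 7, [:: [:: 4]; [:: 8]; [:: 1; 11]; [:: 7]; [:: 5; 6]; [:: 2; 9]; [:: 3; 10]]);
  (4, 3, 1, 9, [:: [:: 4]; [:: 8]; [:: 1; 11]; [:: 7]; [:: 5; 6]; [:: 2; 9]; [:: 3; 10]]);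
  (4, 3, 8, 6, [:: [:: 4]; [:: 8]; [:: 1; 6]; [:: 7]; [:: 2; 9]; [:: 10; 11]; [:: 0; 3; 5]]);
  (4, 3, 8, 7, [:: [:: 5; 6]; [:: 2; 9]; [:: 3; 10]; [:: 0]; [:: 4]; [:: 8]; [:: 1; 7; 11]]);
  (4, 3, 8, 9, [:: [:: 4]; [:: 8]; [:: 1; 9]; [:: 7]; [:: 5; 6]; [:: 10; 11]; [:: 0; 2; 3]]);
  (4, 3, 2, 9, [:: [:: 4]; [:: 0; 3]; [:: 9; 11]; [:: 2]; [:: 10]; [:: 7; 8]; [:: 1; 6; 5]]);
  (4, 3, 5, 6, [:: [:: 4]; [:: 0; 3]; [:: 6; 11]; [:: 5]; [:: 10]; [:: 7; 8]; [:: 1; 9; 2]]);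
  (4, 5, 1, 6, [:: [:: 6; 8]; [:: 4; 10]; [:: 0; 2; 9; 1]; [:: 3]; [:: 5]; [:: 7]; [:: 11]]);
  (4, 5, 1, 7, [:: [:: 3; 8]; [:: 5; 10]; [:: 1; 9; 2]; [:: 0]; [:: 4]; [:: 6]; [:: 7; 11]]);
  (4, 5, 1, 9, [:: [:: 4]; [:: 0; 5]; [:: 8; 9]; [:: 2]; [:: 3]; [:: 10; 11]; [:: 1; 6; 7]]);
  (4, 5, 8, 6, [:: [:: 4]; [:: 8]; [:: 0; 5]; [:: 3]; [:: 2; 9]; [:: 10; 11]; [:: 1; 6; 7]]);
  (4, 5, 8, 7, [:: [:: 4]; [:: 8]; [:: 0; 5]; [:: 3]; [:: 2; 9]; [:: 10; 11]; [:: 1; 6; 7]]);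
  (4, 5, 8, 9, [:: [:: 4]; [:: 0; 5]; [:: 8; 11]; [:: 3]; [:: 10]; [:: 2; 9]; [:: 1; 6; 7]]);
  (4, 5, 2, 9, [:: [:: 4]; [:: 0; 5]; [:: 9; 11]; [:: 2]; [:: 10]; [:: 3; 8]; [:: 1; 6; 7]]);
  (4, 5, 3, 8, [:: [:: 4]; [:: 0; 5]; [:: 8; 11]; [:: 3]; [:: 10]; [:: 2; 9]; [:: 1; 6; 7]]);
  (1, 6, 8, 7, [:: [:: 4; 7]; [:: 8; 9]; [:: 0; 5; 6; 10]; [:: 1]; [:: 2]; [:: 3]; [:: 11]]);
  (1, 6, 8, 9, [:: [:: 3; 8]; [:: 2; 9]; [:: 5; 6; 10]; [:: 0]; [:: 4]; [:: 11]; [:: 1; 7]]);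
  (1, 6, 2, 9, [:: [:: 6; 8]; [:: 1; 7; 4]; [:: 0; 2; 11]; [:: 3]; [:: 5]; [:: 9]; [:: 10]]);
  (1, 6, 3, 8, [:: [:: 4]; [:: 8]; [:: 1; 10]; [:: 7]; [:: 5; 6]; [:: 2; 9]; [:: 3; 11]]);
  (1, 6, 4, 7, [:: [:: 6; 8]; [:: 4; 11]; [:: 0; 2; 9; 1]; [:: 3]; [:: 5]; [:: 7]; [:: 10]]);
  (1, 7, 8, 6, [:: [:: 8; 9]; [:: 0; 5; 6]; [:: 4; 7; 10]; [:: 1]; [:: 2]; [:: 3]; [:: 11]]);
  (1, 7, 8, 9, [:: [:: 6; 8]; [:: 0; 2; 9]; [:: 4; 7; 10]; [:: 1]; [:: 3]; [:: 5]; [:: 11]]);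
  (1, 7, 2, 9, [:: [:: 3; 8]; [:: 2; 11]; [:: 1; 6; 5]; [:: 0]; [:: 4]; [:: 9]; [:: 7; 10]]);
  (1, 7, 3, 8, [:: [:: 4]; [:: 8]; [:: 1; 10]; [:: 7]; [:: 5; 6]; [:: 2; 9]; [:: 3; 11]]);
  (1, 7, 5, 6, [:: [:: 3; 8]; [:: 5; 11]; [:: 1; 9; 2]; [:: 0]; [:: 4]; [:: 6]; [:: 7; 10]]);
  (1, 9, 8, 6, [:: [:: 5; 6]; [:: 3; 8]; [:: 2; 9; 10]; [:: 0]; [:: 4]; [:: 11]; [:: 1; 7]]);
  (1, 9, 8, 7, [:: [:: 4; 7]; [:: 6; 8]; [:: 0; 2; 9; 10]; [:: 1]; [:: 3]; [:: 5]; [:: 11]]);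
  (1, 9, 3, 8, [:: [:: 4]; [:: 8]; [:: 1; 10]; [:: 7]; [:: 5; 6]; [:: 2; 9]; [:: 3; 11]]);
  (1, 9, 4, 7, [:: [:: 8; 9]; [:: 4; 11]; [:: 0; 5; 6; 1]; [:: 2]; [:: 3]; [:: 7]; [:: 10]]);
  (1, 9, 5, 6, [:: [:: 8; 9]; [:: 1; 7; 4]; [:: 0; 5; 11]; [:: 2]; [:: 3]; [:: 6]; [:: 10]]);
  (8, 6, 2, 9, [:: [:: 8]; [:: 1; 6]; [:: 2; 11]; [:: 9]; [:: 10]; [:: 4; 7]; [:: 0; 3; 5]]);
  (8, 6, 4, 7, [:: [:: 8]; [:: 1; 6]; [:: 4; 11]; [:: 7]; [:: 10]; [:: 2; 9]; [:: 0; 3; 5]]);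
  (8, 7, 2, 9, [:: [:: 8]; [:: 1; 7]; [:: 2; 11]; [:: 9]; [:: 10]; [:: 3; 4]; [:: 0; 5; 6]]);
  (8, 7, 5, 6, [:: [:: 8]; [:: 1; 7]; [:: 5; 11]; [:: 6]; [:: 10]; [:: 3; 4]; [:: 0; 2; 9]]);
  (8, 9, 4, 7, [:: [:: 8]; [:: 1; 9]; [:: 4; 11]; [:: 7]; [:: 10]; [:: 5; 6]; [:: 0; 2; 3]]);
  (8, 9, 5, 6, [:: [:: 8]; [:: 1; 9]; [:: 5; 11]; [:: 6]; [:: 10]; [:: 4; 7]; [:: 0; 2; 3]]);
  (2, 9, 3, 8, [:: [:: 4; 7]; [:: 9; 10]; [:: 0; 5; 6]; [:: 1]; [:: 2]; [:: 8]; [:: 3; 11]]);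
  (2, 9, 4, 7, [:: [:: 3; 8]; [:: 2; 10]; [:: 1; 6; 5]; [:: 0]; [:: 4]; [:: 9]; [:: 7; 11]]);
  (2, 9, 5, 6, [:: [:: 10; 11]; [:: 1; 7; 4]; [:: 0; 3; 8]; [:: 2]; [:: 5]; [:: 6]; [:: 9]]);
  (3, 8, 4, 7, [:: [:: 5; 6]; [:: 2; 9]; [:: 3; 10]; [:: 0]; [:: 4]; [:: 8]; [:: 1; 7; 11]]);
  (3, 8, 5, 6, [:: [:: 4; 7]; [:: 6; 11]; [:: 0; 2; 9]; [:: 1]; [:: 5]; [:: 8]; [:: 3; 10]]);
  (4, 7, 5, 6, [:: [:: 3; 8]; [:: 5; 11]; [:: 1; 9; 2]; [:: 0]; [:: 4]; [:: 6]; [:: 7; 10]])].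

Definition K34_model_for (a b c d : nat) : option (seq (seq nat)) :=
  ohead [seq t.2 | t <- K34_models &
           same_pair t.1.1.1.1 t.1.1.1.2 a b && same_pair t.1.1.2 t.1.2 c d].

Definition H_K34_model (u v x y : 'I_10) : 'I_3 + 'I_4 -> seq ('I_10 + bool) :=
  K34_branch (match K34_model_for u v x y, K34_model_for x y u v with
              | Some ss, _ => map (map (H_vertex false)) ss
              | None, Some ss => map (map (H_vertex true)) ss
              | None, None => [::]
              end).

Lemma H_K34_model_validP :
  all (fun u => all (fun v => all (fun x => all (fun y =>
    [&& F4_adj u v, F4_adj x y, u != x, u != y, v != x & v != y] ==>
    seq_minor_model (H_rel u v x y) K34_rel K34_vertices (H_K34_model u v x y))
  (ord_seq 10)) (ord_seq 10)) (ord_seq 10)) (ord_seq 10).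
Proof. by vm_compute. Qed.

Theorem lemma4p14 (u v x y : 'I_10) :
  F4_adj u v -> F4_adj x y ->
  u != x -> u != y -> v != x -> v != y ->
  has_minor (H_rel u v x y) K34_rel.
Proof.
move=> euv exy ux uy vx vy.
apply: (seq_minor_modelP mem_K34_vertices (phi := H_K34_model u v x y)).
move/allP: H_K34_model_validP => /(_ u (mem_ord_seq u)) /allP /(_ v (mem_ord_seq v)).
move=> /allP /(_ x (mem_ord_seq x)) /allP /(_ y (mem_ord_seq y)).
by rewrite euv exy ux uy vx vy.
Qed.
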